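(* Let $I$ be a countable set with $|I|\ge2$, let $\mathfrak{M}_i=(S_i,\mathcal{L}_i)$, $i\in I$, be partial linear spaces, $\mathfrak{M}=\bigotimes_{i\in I}\mathfrak{M}_i$ with point set $S=\prod_{i\in I}S_i$, and let $\mathcal{H}_i$ be a hyperplane of $\mathfrak{M}_i$ for each $i\in I$. Then the set $$\mathcal{H}=\bigcup_{i\in I}\{x\in S: x_i\in\mathcal{H}_i\}$$ is a degenerate and non-spiky hyperplane of $\mathfrak{M}$.
   Context: A partial linear space is a pair $(S,\mathcal{L})$ of points and lines such that every line has at least two points, every point lies on a line, two distinct lines share at most one point; points are collinear if on a common line. A subspace is a set such that any line meeting it in at least two points lies in it; a hyperplane is a proper subspace meeting every line; a set $X$ is spiky if every point of $X$ is collinear with some point outside $X$. Segre product: for $a\in S$, $x\in S_i$, $a[i/x]$ is $a$ with $i$-th coordinate replaced by $x$, $a[i/A]=\{a[i/x]:x\in A\}$; lines are $a[i/l]$, $a\in S$, $i\in I$, $l\in\mathcal{L}_i$. For a hyperplane $\mathcal{H}$, $\mathcal{H}^{[a]}_i=\{x\in S_i:a[i/x]\in\mathcal{H}\}$; $\mathcal{H}$ is non-degenerate if all $\mathcal{H}^{[a]}_i$ ($a\in S$, $i\in I$) are hyperplanes of $\mathfrak{M}_i$, and degenerate otherwise. *)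

From mathcomp Require Import all_boot.
Set Implicit Arguments. Unset Strict Implicit. Unset Printing Implicit Defensive.

Definition collinear (P : Type) (L : (P -> Prop) -> Prop) (x y : P) : Prop :=
  exists l, L l /\ l x /\ l y.

Definition partial_linear_space (P : Type) (L : (P -> Prop) -> Prop) : Prop :=
  (forall l, L l -> exists x y, x <> y /\ l x /\ l y) /\
  (forall x, exists l, L l /\ l x) /\
  (forall l m, L l -> L m -> l <> m ->
     forall x y, l x -> l y -> m x -> m y -> x = y).

Definition subspace (P : Type) (L : (P -> Prop) -> Prop) (X : P -> Prop) : Prop :=
  forall l, L l -> (exists x y, x <> y /\ l x /\ l y /\ X x /\ X y) ->
    forall z, l z -> X z.

Definition hyperplane (P : Type) (L : (P -> Prop) -> Prop) (X : P -> Prop) : Prop :=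
  subspace L X /\ (exists p, ~ X p) /\ (forall l, L l -> exists p, l p /\ X p).

Definition spiky (P : Type) (L : (P -> Prop) -> Prop) (X : P -> Prop) : Prop :=
  forall x, X x -> exists y, ~ X y /\ collinear L x y.

(* a[i/x] : replace the i-th coordinate of a by x *)
Definition upd (I : eqType) (S : I -> Type) (a : forall i, S i) (i : I) (x : S i)
  : forall j, S j :=
  fun j => match @eqP I i j with
           | ReflectT e => eq_rect i S x j e
           | ReflectF _ => a j
           end.

Definition segre_lines (I : eqType) (S : I -> Type)
  (L : forall i, (S i -> Prop) -> Prop) : ((forall i, S i) -> Prop) -> Prop :=
  fun m => exists (a : forall i, S i) (i : I) (l : S i -> Prop),
    L i l /\ m = (fun p => exists x, l x /\ p = @upd I S a i x).

Definition slice (I : eqType) (S : I -> Type) (H : (forall i, S i) -> Prop)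
  (a : forall i, S i) (i : I) : S i -> Prop :=
  fun x => H (@upd I S a i x).

Definition nondegenerate (I : eqType) (S : I -> Type)
  (L : forall i, (S i -> Prop) -> Prop) (H : (forall i, S i) -> Prop) : Prop :=
  forall (a : forall i, S i) (i : I), hyperplane (L i) (@slice I S H a i).

Definition degenerate (I : eqType) (S : I -> Type)
  (L : forall i, (S i -> Prop) -> Prop) (H : (forall i, S i) -> Prop) : Prop :=
  ~ nondegenerate L H.

From mathcomp Require Import all_boot.
From Stdlib Require Import ClassicalEpsilon.

(* A line of the Segre product moves a single coordinate, so a point on it
   has exactly the coordinates of [a] outside the moving index [i]. Hence
   [H = U_i {x | x_i in H_i}] meets a line [a[i/l]] either in all of it
   (some [a_j], [j <> i], lies in [H_j]) or in [a[i/(l /\ H_i)]]; this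
   gives the subspace and line-meeting properties from those of the [H_i],
   and a point outside [H] is chosen coordinatewise outside the [H_i].
   Choosing [a] with [a_j] in [H_j] makes the slice [H^[a]_i] ([i <> j]) the
   whole of [S_i], so [H] is degenerate. Finally a point of [H] with two
   coordinates [i <> j] inside [H_i], [H_j] keeps one of them along any
   line, so it is collinear only with points of [H]: [H] is not spiky. *)

Lemma dep_choice (I : Type) (S : I -> Type) (P : forall i, S i -> Prop) :
  (forall i, exists x, P i x) -> exists f : forall i, S i, forall i, P i (f i).
Proof.
move=> hP; exists (fun i => proj1_sig (constructive_indefinite_description _ (hP i))).
by move=> i; exact: proj2_sig.
Qed.

Lemma hyperplane_nonempty (P : Type) (L : (P -> Prop) -> Prop) (X : P -> Prop) :
  partial_linear_space L -> hyperplane L X -> exists x, X x.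
Proof.
case=> _ [on_line _] [_ [[p _] meets]].
have [l [Ll _]] := on_line p.
by have [x [_ Xx]] := meets l Ll; exists x.
Qed.

Section SegreProduct.

Variables (I : eqType) (S : I -> Type) (L : forall i, (S i -> Prop) -> Prop).
Implicit Types (a x y : forall i, S i) (i j k : I).

Lemma upd_same a i (u : S i) : upd a u i = u.
Proof.
rewrite /upd; case: (@eqP I i i) => [e|n]; last by case: n.
by rewrite (eq_irrelevance e erefl).
Qed.

Lemma upd_other a i (u : S i) j : i <> j -> upd a u j = a j.
Proof. by rewrite /upd; case: (@eqP I i j). Qed.

Lemma segre_collinear_agree x y :
  collinear (segre_lines L) x y -> exists k, forall j, k <> j -> x j = y j.
Proof.
case=> _ [[a [k [l [_ ->]]]] [[u [_ ->]] [v [_ ->]]]].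
by exists k => j kj; rewrite !upd_other.
Qed.

Variable Hs : forall i, S i -> Prop.

Definition coord_union a : Prop := exists i, Hs i (a i).

Lemma coord_union_upd a i (u : S i) :
  coord_union (upd a u) <-> Hs i u \/ exists2 j, i <> j & Hs j (a j).
Proof.
split.
- case=> j; have [ij|/eqP ij] := eqVneq i j; first by subst j; rewrite upd_same; left.
  by rewrite upd_other // => Hj; right; exists j.
- case=> [Hu|[j ij Hj]]; first by exists i; rewrite upd_same.
  by exists j; rewrite upd_other.
Qed.

Lemma coord_union_subspace :
  (forall i, subspace (L i) (Hs i)) -> subspace (segre_lines L) coord_union.
Proof.
move=> sub _ [a [i [l [Ll ->]]]] [p [q [pq [[u [lu Ep]] [[v [lv Eq]] [Hp Hq]]]]]].
subst p q => _ [w [lw ->]]; apply/coord_union_upd.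
move/coord_union_upd: Hp => [Hu|]; last by right.
move/coord_union_upd: Hq => [Hv|]; last by right.
left; apply: (sub i l Ll) lw; exists u, v; split=> //.
by move=> uv; apply: pq; rewrite uv.
Qed.

Lemma coord_union_meets_lines :
  (forall i l, L i l -> exists u, l u /\ Hs i u) ->
  forall m, segre_lines L m -> exists x, m x /\ coord_union x.
Proof.
move=> meets _ [a [i [l [Ll ->]]]].
have [u [lu Hu]] := meets i l Ll.
by exists (upd a u); split; [exists u | exists i; rewrite upd_same].
Qed.

Lemma coord_union_proper :
  (forall i, exists u, ~ Hs i u) -> exists x, ~ coord_union x.
Proof. by case/dep_choice=> f hf; exists f; case=> i; apply: hf. Qed.

Lemma coord_union_hyperplane :
  (forall i, hyperplane (L i) (Hs i)) -> hyperplane (segre_lines L) coord_union.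
Proof.
move=> hH; split; [|split].
- by apply: coord_union_subspace => i; case: (hH i).
- by apply: coord_union_proper => i; case: (hH i) => _ [].
- by apply: coord_union_meets_lines => i; case: (hH i) => _ [].
Qed.

Lemma coord_union_slice_full {a i j} :
  i <> j -> Hs j (a j) -> forall u : S i, slice coord_union a u.
Proof. by move=> ij Hj u; apply/coord_union_upd; right; exists j. Qed.

Lemma coord_union_degenerate a i j :
  i <> j -> Hs j (a j) -> degenerate L coord_union.
Proof.
move=> ij Hj nondeg; have [_ [[u nu] _]] := nondeg a i.
exact/nu/(coord_union_slice_full ij).
Qed.

Lemma coord_union_not_spiky x i j :
  i <> j -> Hs i (x i) -> Hs j (x j) -> ~ spiky (segre_lines L) coord_union.
Proof.
move=> ij Hi Hj spik.
have [y [ny /segre_collinear_agree [k agree]]] := spik x (ex_intro _ i Hi).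
apply: ny; have [ki|ki] := eqVneq k i.
- by subst k; exists j; rewrite -agree.
- by exists i; rewrite -agree //; apply/eqP.
Qed.

End SegreProduct.

Theorem proposition3p8 (I : countType) (S : I -> Type)
  (L : forall i, (S i -> Prop) -> Prop)
  (Hs : forall i, S i -> Prop)
  (hI : exists i j : I, i <> j)
  (hPLS : forall i, partial_linear_space (L i))
  (hH : forall i, hyperplane (L i) (Hs i)) :
  let H := fun x : (forall i, S i) => exists i, Hs i (x i) in
  hyperplane (segre_lines L) H /\ degenerate L H /\ ~ spiky (segre_lines L) H.
Proof.
move=> H; have [i [j ij]] := hI.
have [p inH] : exists p : forall k, S k, forall k, Hs k (p k).
  by apply: dep_choice => k; exact: hyperplane_nonempty (hPLS k) (hH k).
split; [|split].
- exact: coord_union_hyperplane.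
- exact: coord_union_degenerate ij (inH j).
- exact: coord_union_not_spiky ij (inH i) (inH j).
Qed.
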